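(* Assume the setting of the context, with $\|\widehat B^{k,1}\|_F\le B$ and $\widehat\ell_1=\ell_1(1+B)^2$. Fix $\widehat x^k$, $\delta_k\in(0,\delta_{\max}]$ and constants $\kappa_{dcp},\kappa_{ef},\kappa_{ed}>0$. Let $y^{i,*}:\mathcal{B}(\widehat x^k,\delta_k)\to\mathcal{Y}$ satisfy $$\|y^{i,*}(x)-y^{k,*}(x)\|\le\min\Big\{\frac{\kappa_{ed}\delta_k}{\widehat\ell_1},\ \frac{\kappa_{ef}\delta_k^2}{L_1}\Big\}\quad\forall x\in\mathcal{B}(\widehat x^k,\delta_k),$$ let $g_k=\nabla_x\mathcal{L}^k(\widehat x^k,y^{i,*}(\widehat x^k))$, and let $s^k$ with $\|s^k\|\le\delta_k$ satisfy $\mathcal{L}^k(\widehat x^k,y^{i,*}(\widehat x^k))-\mathcal{L}^k(\widehat x^k+s^k,y^{i,*}(\widehat x^k+s^k))\ge\kappa_{dcp}\|g_k\|\min\{\delta_k,1\}$. Assume $|\Phi(x)-\Phi^k(x)|\le\kappa_{ef}\delta_k^2$ for all $x\in\mathcal{B}(\widehat x^k,\delta_k)$ and $\|\nabla\Phi(\widehat x^k)\|-\|\nabla\Phi^k(\widehat x^k)\|\le\kappa_{ed}\delta_k$. If $$\delta_k\le\frac{\|\nabla\Phi(\widehat x^k)\|}{\big(\frac{8\kappa_{ef}}{\kappa_{dcp}}+2\kappa_{ed}\big)\max\{1,\delta_{\max}\}},$$ then $$\Phi(\widehat x^k+s^k)-\Phi(\widehat x^k)\le-C_1\|\nabla\Phi(\widehat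 x^k)\|\delta_k,\qquad C_1=\frac{4\kappa_{dcp}\kappa_{ef}}{(8\kappa_{ef}+2\kappa_{ed}\kappa_{dcp})\max\{\delta_{\max},1\}}.$$
   Context: Standing assumptions: $l:\mathbb{R}^n\times\mathbb{R}^m\times\mathbb{R}^d\to\mathbb{R}$ is $\ell_1$-smooth and $L_1$-Lipschitz; $\psi:\mathbb{R}^n\to\mathbb{R}^d$ is twice differentiable, $\ell_0$-smooth and $L_0$-Lipschitz; $\mathcal{Y}\subset\mathbb{R}^m$ is nonempty, closed, convex, bounded; $l(x,\cdot,z)$ is $\mu$-strongly concave on $\mathcal{Y}$; $\tilde\epsilon$ is a random vector in $\mathbb{R}^d$ with compact support and zero mean. $\mathcal{L}(x,y)=\mathbb{E}_{\tilde\epsilon}[l(x,y,\psi(x)+\tilde\epsilon)]$, $\Phi(x)=\max_{y\in\mathcal{Y}}\mathcal{L}(x,y)$ (differentiable). $\mathcal{B}(x,\delta)=\{z:\|z-x\|\le\delta\}$. Local model at iteration $k$: data $x^i\in\mathcal{B}(\widehat x^k,\delta_k)$, $\omega^i=\psi(x^i)+\epsilon^i$ ($i=1,\dots,N_k$), least-squares affine coefficients $\widehat B^{k,1},\widehat B^{k,0}$, residuals $e^{k,i}=\omega^i-(\widehat B^{k,1})^\top x^i-(\widehat B^{k,0})^\top$, $m_k(x,e)=(\widehat B^{k,1})^\top x+(\widehat B^{k,0})^\top+e$, $\mathcal{L}^k(x,y)=\frac1{N_k}\sum_i l(x,y,m_k(x,e^{k,i}))$, $\Phi^k(x)=\max_{y\in\mathcal{Y}}\mathcal{L}^k(x,y)$,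 $y^{k,*}(x)=\arg\max_{y\in\mathcal{Y}}\mathcal{L}^k(x,y)$. (In the paper the two accuracy conditions on $\Phi-\Phi^k$ form an event holding with probability at least $\alpha$ for large enough samples.) *)

From HB Require Import structures.
From mathcomp Require Import all_boot all_order all_algebra.
From mathcomp Require Import all_classical all_reals all_analysis.
Set Implicit Arguments.
Unset Strict Implicit.
Unset Printing Implicit Defensive.
Import Order.TTheory GRing.Theory Num.Theory.
Import numFieldNormedType.Exports.
Local Open Scope classical_set_scope.
Local Open Scope ring_scope.

Section Defs.
Variable R : realType.

Definition enorm (p : nat) (v : 'rV[R]_p) : R :=
  Num.sqrt (\sum_(i < p) v ord0 i ^+ 2).

Definition fnorm (p q : nat) (A : 'M[R]_(p, q)) : R :=
  Num.sqrt (\sum_(i < p) \sum_(j < q) A i j ^+ 2).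

Definition eball (p : nat) (c : 'rV[R]_p) (r : R) : set 'rV[R]_p :=
  [set z | enorm (z - c) <= r].

Definition ebasis (p : nat) (i : 'I_p) : 'rV[R]_p := delta_mx ord0 i.

Definition egrad (p : nat) (f : 'rV[R]_p -> R) (x : 'rV[R]_p) : 'rV[R]_p :=
  \row_(i < p) derive f x (ebasis i).

(* Jacobian of a vector function f : R^p -> R^q, as a p x q matrix
   (row i = partial derivative along e_i), so that f(x + v) ~ f x + v *m J. *)
Definition ejac (p q : nat) (f : 'rV[R]_p -> 'rV[R]_q) (x : 'rV[R]_p)
  : 'M[R]_(p, q) :=
  \matrix_(i < p, j < q) (derive f x (ebasis i)) ord0 j.

Definition e_lipschitz (p : nat) (L : R) (f : 'rV[R]_p -> R) : Prop :=
  forall x y, `|f x - f y| <= L * enorm (x - y).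

Definition e_lipschitzV (p q : nat) (L : R) (f : 'rV[R]_p -> 'rV[R]_q) : Prop :=
  forall x y, enorm (f x - f y) <= L * enorm (x - y).

Definition e_smooth (p : nat) (L : R) (f : 'rV[R]_p -> R) : Prop :=
  (forall x, differentiable f x) /\
  (forall x y, enorm (egrad f x - egrad f y) <= L * enorm (x - y)).

(* L-e_smooth vector function: differentiable with Jacobian L-Lipschitz in
   operator norm (written out: ||v (J x - J y)|| <= L ||x - y|| ||v||). *)
Definition e_smoothV (p q : nat) (L : R) (f : 'rV[R]_p -> 'rV[R]_q) : Prop :=
  (forall x, differentiable f x) /\
  (forall x y (v : 'rV[R]_p),
      enorm (v *m (ejac f x - ejac f y)) <= L * enorm (x - y) * enorm v).

Definition twice_differentiable (p q : nat) (f : 'rV[R]_p -> 'rV[R]_q) : Prop :=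
  (forall x, differentiable f x) /\ (forall x, differentiable (ejac f) x).

Definition uncurry3 (n m d : nat) (l : 'rV[R]_n -> 'rV[R]_m -> 'rV[R]_d -> R)
  (w : 'rV[R]_(n + m + d)) : R :=
  l (lsubmx (lsubmx w)) (rsubmx (lsubmx w)) (rsubmx w).

Definition e_convex_set (p : nat) (Y : set 'rV[R]_p) : Prop :=
  forall y1 y2 (t : R), Y y1 -> Y y2 -> 0 <= t <= 1 ->
    Y (t *: y1 + (1 - t) *: y2).

Definition e_bounded_set (p : nat) (Y : set 'rV[R]_p) : Prop :=
  exists M : R, forall y, Y y -> enorm y <= M.

Definition strongly_concave_on (p : nat) (mu : R) (Y : set 'rV[R]_p)
  (g : 'rV[R]_p -> R) : Prop :=
  forall y1 y2 (t : R), Y y1 -> Y y2 -> 0 <= t <= 1 ->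
    t * g y1 + (1 - t) * g y2 + mu / 2 * t * (1 - t) * enorm (y1 - y2) ^+ 2
      <= g (t *: y1 + (1 - t) *: y2).

End Defs.

(* Since the model objective L^k averages functions that are strongly concave in y,
   its maximiser ys = y^{k,*} has quadratic growth and therefore depends
   1/2-Hoelder continuously on x; this gives Danskin's formula
   grad Phi^k (x) = grad_x L^k (x, ys x).  The x-gradient of L^k is
   ell1 (1 + B)-Lipschitz in y, so the closeness of y^i to ys yields
   ||g_k|| >= ||grad Phi|| - 2 ked delta, while the Lipschitz continuity of L^k in y
   and the two accuracy conditions turn the model decrease into
   Phi (x + s) - Phi x <= 3 kef delta^2 - kdcp ||g_k|| min (delta, 1).
   The upper bound on delta lets the linear decrease absorb the quadratic error. *)

From HB Require Import structures.
From mathcomp Require Import all_boot all_order all_algebra.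
From mathcomp Require Import all_classical all_reals all_analysis.
From mathcomp Require Import ring lra.
Import Order.TTheory GRing.Theory Num.Theory.
Import numFieldNormedType.Exports.
Local Open Scope classical_set_scope.
Local Open Scope ring_scope.

Set Implicit Arguments.
Unset Strict Implicit.
Unset Printing Implicit Defensive.

Section EuclideanNorm.
Variables (R : realType) (p : nat).
Implicit Types (u v w : 'rV[R]_p) (t : R).

Definition edot u v : R := (u *m v^T) 0 0.

Lemma edotE u v : edot u v = \sum_(i < p) u 0 i * v 0 i.
Proof. by rewrite /edot mxE; apply: eq_bigr => i _; rewrite mxE. Qed.

Lemma edotC u v : edot u v = edot v u.
Proof. by rewrite !edotE; apply: eq_bigr => i _; rewrite mulrC. Qed.

Lemma edotDl u v w : edot (u + v) w = edot u w + edot v w.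
Proof. by rewrite /edot mulmxDl mxE. Qed.

Lemma edotNl u v : edot (- u) v = - edot u v.
Proof. by rewrite /edot mulNmx mxE. Qed.

Lemma edotZl t u v : edot (t *: u) v = t * edot u v.
Proof. by rewrite /edot -scalemxAl mxE. Qed.

Lemma edot0l v : edot 0 v = 0.
Proof. by rewrite /edot mul0mx mxE. Qed.

Lemma edotBl u v w : edot (u - v) w = edot u w - edot v w.
Proof. by rewrite edotDl edotNl. Qed.

Lemma edot_ebasis u (i : 'I_p) : edot u (ebasis R i) = u 0 i.
Proof.
rewrite edotE (bigD1 i) //= big1 => [|j ji]; rewrite !mxE ?eqxx ?mulr1 ?addr0 //.
by rewrite (negbTE ji) andbF mulr0.
Qed.

Lemma enorm_ge0 u : 0 <= enorm u.
Proof. exact: sqrtr_ge0. Qed.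

Lemma sqr_enormE u : enorm u ^+ 2 = \sum_(i < p) u 0 i ^+ 2.
Proof. by rewrite sqr_sqrtr //; apply: sumr_ge0 => i _; exact: sqr_ge0. Qed.

Lemma sqr_enorm u : enorm u ^+ 2 = edot u u.
Proof. by rewrite sqr_enormE edotE; apply: eq_bigr => i _; rewrite expr2. Qed.

Lemma enorm_eq0 u : (enorm u == 0) = (u == 0).
Proof.
apply/idP/eqP => [|->]; last by rewrite /enorm big1 ?sqrtr0 // => i _; rewrite mxE expr0n.
rewrite sqrtr_eq0 le_eqVlt ltNge (sumr_ge0 _ (fun i _ => sqr_ge0 _)) orbF.
rewrite psumr_eq0 => [/allP u0|i _]; last exact: sqr_ge0.
by apply/rowP => i; rewrite mxE; apply/eqP; rewrite -sqrf_eq0; exact: u0 (mem_index_enum i).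
Qed.

Lemma enorm0 : enorm (0 : 'rV[R]_p) = 0.
Proof. by apply/eqP; rewrite enorm_eq0. Qed.

Lemma enormZ t u : enorm (t *: u) = `|t| * enorm u.
Proof.
rewrite /enorm -sqrtr_sqr -sqrtrM ?sqr_ge0 // mulr_sumr.
by congr Num.sqrt; apply: eq_bigr => i _; rewrite mxE exprMn.
Qed.

Lemma enormN u : enorm (- u) = enorm u.
Proof. by rewrite -scaleN1r enormZ normrN1 mul1r. Qed.

Lemma enorm_distC u v : enorm (u - v) = enorm (v - u).
Proof. by rewrite -enormN opprB. Qed.

Lemma sqr_enormD u v : enorm (u + v) ^+ 2 = enorm u ^+ 2 + 2 * edot u v + enorm v ^+ 2.
Proof. by rewrite !sqr_enorm edotDl ![edot _ (_ + _)]edotC !edotDl (edotC v u); ring. Qed.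

Lemma normr_edot_le u v : `|edot u v| <= enorm u * enorm v.
Proof.
have [->|u0] := eqVneq u 0; first by rewrite edot0l normr0 mulr_ge0 ?enorm_ge0.
have a1 : enorm u != 0 by rewrite enorm_eq0.
have a0 : 0 < enorm u ^+ 2 by rewrite exprn_gt0 // lt_def a1 enorm_ge0.
(* [t] minimises [enorm (t *: u + v)]. *)
set t := - (edot u v / enorm u ^+ 2).
have := sqr_ge0 (enorm (t *: u + v)).
rewrite sqr_enormD enormZ edotZl exprMn -normrX ger0_norm ?sqr_ge0 //.
have -> : t ^+ 2 * enorm u ^+ 2 + 2 * (t * edot u v) = - (edot u v ^+ 2 / enorm u ^+ 2).
  by rewrite /t; field.
rewrite addrC subr_ge0 ler_pdivrMr // mulrC -exprMn => h.
by rewrite -(ler_pXn2r (n:=2)) ?nnegrE ?mulr_ge0 ?enorm_ge0 // real_normK ?num_real.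
Qed.

Lemma ler_enormD u v : enorm (u + v) <= enorm u + enorm v.
Proof.
rewrite -(ler_pXn2r (n:=2)) ?nnegrE ?addr_ge0 ?enorm_ge0 // sqr_enormD sqrrD.
by have := ler_norm (edot u v); have := normr_edot_le u v; lra.
Qed.

Lemma ler_enorm_sum (I : Type) (r : seq I) (a : I -> 'rV[R]_p) :
  enorm (\sum_(i <- r) a i) <= \sum_(i <- r) enorm (a i).
Proof.
elim/big_rec2: _ => [|i x y _ h]; first by rewrite enorm0.
exact: le_trans (ler_enormD _ _) (lerD (lexx _) h).
Qed.

End EuclideanNorm.

Section MatrixNorms.
Variables (R : realType) (p q : nat).

Lemma fnorm_ge0 (M : 'M[R]_(p, q)) : 0 <= fnorm M.
Proof. exact: sqrtr_ge0. Qed.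

Lemma sqr_enorm_row_mx (u : 'rV[R]_p) (w : 'rV[R]_q) :
  enorm (row_mx u w) ^+ 2 = enorm u ^+ 2 + enorm w ^+ 2.
Proof.
rewrite !sqr_enormE big_split_ord /=.
by congr (_ + _); apply: eq_bigr => i _; rewrite (row_mxEl, row_mxEr).
Qed.

Lemma enorm_mulmx_le (v : 'rV[R]_p) (M : 'M[R]_(p, q)) :
  enorm (v *m M) <= fnorm M * enorm v.
Proof.
rewrite -(ler_pXn2r (n:=2)) ?nnegrE ?mulr_ge0 ?enorm_ge0 ?fnorm_ge0 //.
rewrite exprMn [fnorm M ^+ 2]sqr_sqrtr; last first.
  by apply: sumr_ge0 => i _; apply: sumr_ge0 => j _; exact: sqr_ge0.
rewrite sqr_enormE exchange_big mulr_suml; apply: ler_sum => k _.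
have -> : (v *m M) 0 k = edot v (col k M)^T.
  by rewrite edotE mxE; apply: eq_bigr => j _; rewrite !mxE.
have -> : \sum_j M j k ^+ 2 = enorm (col k M)^T ^+ 2.
  by rewrite sqr_enormE; apply: eq_bigr => j _; rewrite !mxE.
rewrite mulrC -exprMn -real_normK ?num_real // ler_pXn2r ?nnegrE ?mulr_ge0 ?enorm_ge0 //.
exact: normr_edot_le.
Qed.

Lemma edot_mulmx (a : 'rV[R]_q) (v : 'rV[R]_p) (M : 'M[R]_(p, q)) :
  edot a (v *m M) = edot (a *m M^T) v.
Proof. by rewrite /edot trmx_mul mulmxA. Qed.

Lemma enorm_mul_trmx_le (M : 'M[R]_(p, q)) c : 0 <= c ->
  (forall v, enorm (v *m M) <= c * enorm v) ->
  forall a, enorm (a *m M^T) <= c * enorm a.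
Proof.
move=> c0 hM a; set w := a *m M^T.
have : enorm w ^+ 2 <= c * enorm a * enorm w.
  rewrite sqr_enorm -edot_mulmx; apply: le_trans (ler_norm _) _.
  apply: le_trans (normr_edot_le _ _) _; rewrite -mulrA mulrCA.
  by rewrite ler_wpM2l ?enorm_ge0 ?hM.
have [->|w0] := eqVneq (enorm w) 0; first by rewrite mulr_ge0 ?enorm_ge0.
by rewrite expr2 ler_pM2r // lt_def w0 enorm_ge0.
Qed.

End MatrixNorms.

Section Average.
Variables (R : realType) (N : nat).
Hypothesis N_gt0 : (0 < N)%N.

Lemma avg_ge (a : 'I_N -> R) c :
  (forall i, c <= a i) -> c <= N%:R^-1 * \sum_(i < N) a i.
Proof.
move=> h; rewrite ler_pdivlMl ?ltr0n //.
by apply: le_trans (ler_sum _ (fun i _ => h i)); rewrite sumr_const card_ord mulr_natl.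
Qed.

Lemma ler_norm_avg (a : 'I_N -> R) c :
  (forall i, `|a i| <= c) -> `|N%:R^-1 * \sum_(i < N) a i| <= c.
Proof.
move=> h; rewrite normrM ger0_norm ?invr_ge0 ?ler0n // ler_pdivrMl ?ltr0n //.
apply: le_trans (ler_norm_sum _ _ _) (le_trans (ler_sum _ (fun i _ => h i)) _).
by rewrite sumr_const card_ord mulr_natl.
Qed.

Lemma ler_enorm_avg p (a : 'I_N -> 'rV[R]_p) c :
  (forall i, enorm (a i) <= c) -> enorm (N%:R^-1 *: \sum_(i < N) a i) <= c.
Proof.
move=> h; rewrite enormZ ger0_norm ?invr_ge0 ?ler0n // ler_pdivrMl ?ltr0n //.
apply: le_trans (ler_enorm_sum _ _) (le_trans (ler_sum _ (fun i _ => h i)) _).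
by rewrite sumr_const card_ord mulr_natl.
Qed.

End Average.

Section Derivatives.
Variable R : realType.

Lemma derive_along_eq (V W : normedModType R) (g : V -> R) (f : W -> R) a v b u :
  (forall h : R, g (h *: v + a) = f (h *: u + b)) ->
  (derivable g a v <-> derivable f b u) /\ 'D_v g a = 'D_u f b.
Proof.
move=> gf; have gf0 : g a = f b by have := gf 0; rewrite !scale0r !add0r.
suff E : (fun h : R => h^-1 *: ((g \o shift a) (h *: v) - g a)) =
          (fun h : R => h^-1 *: ((f \o shift b) (h *: u) - f b)).
  by rewrite /derivable /derive E.
by apply: funext => h /=; rewrite gf gf0.
Qed.

Lemma derive_egrad p (F : 'rV[R]_p -> R) w u :
  differentiable F w -> 'D_u F w = edot (egrad F w) u.
Proof.
move=> dF; rewrite deriveE // {1}(row_sum_delta u) linear_sum edotE.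
by apply: eq_bigr => j _; rewrite linearZ /= mxE -deriveE // mulrC.
Qed.

Lemma smooth_second_diff_le p (F : 'rV[R]_p -> R) L : e_smooth L F ->
  forall a b u, `|F (u + a) - F a - (F (u + b) - F b)| <= L * enorm (a - b) * enorm u.
Proof.
case=> dF LgradF a b u.
pose phi t := F (t *: u + a) - F (t *: u + b).
have line c t : (derivable (fun s : R => F (s *: u + c)) t 1 <->
    derivable F (t *: u + c) u) /\
    'D_1 (fun s : R => F (s *: u + c)) t = 'D_u F (t *: u + c).
  by apply: derive_along_eq => h; rewrite -[h *: 1]/(h * 1) mulr1 scalerDl addrA.
have dline c t : derivable (fun s : R => F (s *: u + c)) t 1.
  by apply/(line c t).1/diff_derivable.
have dphi t : is_derive t (1 : R) phi ('D_u F (t *: u + a) - 'D_u F (t *: u + b)).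
  apply: DeriveDef; first exact: derivableB.
  by rewrite deriveB // (line a t).2 (line b t).2.
have cphi : {within `[0, 1], continuous phi}.
  by apply: derivable_within_continuous => t _; case: (dphi t).
have [c _ mvt] := MVT ltr01 (fun t _ => dphi t) cphi.
have -> : F (u + a) - F a - (F (u + b) - F b) = phi 1 - phi 0.
  by rewrite /phi !scale1r !scale0r !add0r; ring.
rewrite mvt subr0 mulr1 !derive_egrad // -edotBl.
apply: le_trans (normr_edot_le _ _) (ler_wpM2r (enorm_ge0 _) _).
by have := LgradF (c *: u + a) (c *: u + b); rewrite opprD addrACA subrr add0r.
Qed.

Lemma cvg_at0_of_sqr_le (f : R -> R) C :
  (forall h, `|f h| ^+ 2 <= C * `|h|) -> f x @[x --> 0^'] --> 0.
Proof.
move=> hf; apply/cvgr0Pnorm_le => e e0.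
have C0 : 0 <= C by have := hf 1; rewrite normr1 mulr1; apply: le_trans; exact: sqr_ge0.
have d0 : 0 < e ^+ 2 / (C + 1) by rewrite divr_gt0 ?exprn_gt0 //; lra.
near=> h.
have hh : `|h| <= e ^+ 2 / (C + 1) by near: h; apply: dnbhs0_le.
rewrite -(ler_pXn2r (n:=2)) ?nnegrE ?normr_ge0 ?(ltW e0) //.
apply: le_trans (hf h) (le_trans (ler_wpM2l C0 hh) _).
by rewrite mulrA ler_pdivrMr; [have := sqr_ge0 e; nra | lra].
Unshelve. all: by end_near.
Qed.

End Derivatives.

Section LocalModel.
Variables (R : realType) (n m d N : nat).
Variable l : 'rV[R]_n -> 'rV[R]_m -> 'rV[R]_d -> R.
Variables (B1 : 'M[R]_(n, d)) (B0 : 'rV[R]_d) (e : 'I_N -> 'rV[R]_d) (B : R).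
Hypothesis B1_le : fnorm B1 <= B.
Hypothesis N_gt0 : (0 < N)%N.

Local Notation F := (uncurry3 l).

Definition model_obj x y : R :=
  N%:R^-1 * \sum_(i < N) l x y (x *m B1 + B0 + e i).

Definition model_point x y (i : 'I_N) : 'rV[R]_(n + m + d) :=
  row_mx (row_mx x y) (x *m B1 + B0 + e i).

Definition model_jac : 'M[R]_(n, n + m + d) := row_mx (row_mx 1%:M 0) B1.

Lemma model_objE x y :
  model_obj x y = N%:R^-1 * \sum_(i < N) F (model_point x y i).
Proof.
congr (_ * _); apply: eq_bigr => i _.
by rewrite /uncurry3 /model_point row_mxKl row_mxKl row_mxKr row_mxKr.
Qed.

Lemma model_pointD v x y i :
  model_point (v + x) y i = v *m model_jac + model_point x y i.
Proof.
rewrite /model_point /model_jac !mul_mx_row mulmx1 mulmx0 !add_row_mx add0r.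
by rewrite mulmxDl !addrA.
Qed.

Lemma enorm_model_pointB x y1 y2 i :
  enorm (model_point x y1 i - model_point x y2 i) = enorm (y1 - y2).
Proof.
apply: (pexpIrn (isT : (0 < 2)%N)); rewrite ?nnegrE ?enorm_ge0 //.
rewrite /model_point !opp_row_mx !add_row_mx !sqr_enorm_row_mx !subrr !enorm0.
by rewrite expr0n add0r addr0.
Qed.

Let B_ge0 : 0 <= B := le_trans (fnorm_ge0 B1) B1_le.

Lemma enorm_model_jac v : enorm (v *m model_jac) <= (1 + B) * enorm v.
Proof.
rewrite -(ler_pXn2r (n:=2)) ?nnegrE ?mulr_ge0 ?enorm_ge0 ?addr_ge0 ?B_ge0 //.
rewrite /model_jac !mul_mx_row mulmx1 mulmx0 !sqr_enorm_row_mx enorm0 expr0n addr0.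
have vB : enorm (v *m B1) <= B * enorm v.
  exact: le_trans (enorm_mulmx_le v B1) (ler_wpM2r (enorm_ge0 v) B1_le).
have := enorm_ge0 (v *m B1); have := enorm_ge0 v; have := B_ge0; nra.
Qed.

Variables (L1 ell1 : R).
Hypotheses (L1_ge0 : 0 <= L1) (ell1_ge0 : 0 <= ell1).
Hypothesis F_lipschitz : e_lipschitz L1 F.
Hypothesis F_smooth : e_smooth ell1 F.

Lemma model_objB x1 y1 x2 y2 : model_obj x1 y1 - model_obj x2 y2 =
  N%:R^-1 * \sum_(i < N) (F (model_point x1 y1 i) - F (model_point x2 y2 i)).
Proof. by rewrite !model_objE -mulrBr sumrB. Qed.

Lemma model_obj_lipschitz_x x1 x2 y :
  `|model_obj x1 y - model_obj x2 y| <= L1 * (1 + B) * enorm (x1 - x2).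
Proof.
rewrite model_objB; apply: ler_norm_avg => // i; apply: le_trans (F_lipschitz _ _) _.
rewrite -{1}(subrK x2 x1) model_pointD addrK -mulrA ler_wpM2l //.
exact: enorm_model_jac.
Qed.

Lemma model_obj_lipschitz_y x y1 y2 :
  `|model_obj x y1 - model_obj x y2| <= L1 * enorm (y1 - y2).
Proof.
rewrite model_objB; apply: ler_norm_avg => // i.
by apply: le_trans (F_lipschitz _ _) _; rewrite enorm_model_pointB.
Qed.

Lemma model_obj_cross_le x v y1 y2 :
  `|model_obj (v + x) y1 - model_obj x y1 - (model_obj (v + x) y2 - model_obj x y2)|
    <= ell1 * (1 + B) * enorm v * enorm (y1 - y2).
Proof.
rewrite !model_objB -mulrBr -sumrB; apply: ler_norm_avg => // i.
rewrite !model_pointD; apply: le_trans (smooth_second_diff_le F_smooth _ _ _) _.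
rewrite enorm_model_pointB.
rewrite (_ : _ * enorm v * _ = ell1 * enorm (y1 - y2) * ((1 + B) * enorm v)).
  by rewrite ler_wpM2l ?mulr_ge0 ?enorm_ge0 ?enorm_model_jac.
by ring.
Qed.

Lemma derive_model_obj x y v :
  derivable (model_obj^~ y) x v /\ 'D_v (model_obj^~ y) x =
    N%:R^-1 * \sum_(i < N) edot (egrad F (model_point x y i)) (v *m model_jac).
Proof.
have dF := F_smooth.1.
have -> : model_obj^~ y = N%:R^-1 \*: \sum_(i < N) (fun x => F (model_point x y i)).
  by apply: funext => z; rewrite model_objE /= fct_sumE.
have along i : (derivable (fun x => F (model_point x y i)) x v <->
    derivable F (model_point x y i) (v *m model_jac)) /\
    'D_v (fun x => F (model_point x y i)) x = 'D_(v *m model_jac) F (model_point x y i).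
  by apply: derive_along_eq => h; rewrite model_pointD scalemxAl.
have dv i : derivable (fun x => F (model_point x y i)) x v.
  by apply/(along i).1/diff_derivable.
split; first by apply: derivableZ; apply: derivable_sum.
rewrite deriveZ ?derive_sum //; last exact: derivable_sum.
by congr (_ * _); apply: eq_bigr => i _; rewrite (along i).2 derive_egrad.
Qed.

Lemma egrad_model_obj x y : egrad (model_obj^~ y) x =
  N%:R^-1 *: \sum_(i < N) egrad F (model_point x y i) *m model_jac^T.
Proof.
apply/rowP => j; rewrite !mxE (derive_model_obj x y _).2 summxE.
by congr (_ * _); apply: eq_bigr => i _; rewrite edot_mulmx edot_ebasis.
Qed.

Lemma egrad_model_obj_lipschitz_y x y1 y2 :
  enorm (egrad (model_obj^~ y1) x - egrad (model_obj^~ y2) x)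
    <= ell1 * (1 + B) * enorm (y1 - y2).
Proof.
rewrite !egrad_model_obj -scalerBr -sumrB; apply: ler_enorm_avg => // i.
rewrite -mulmxBl; apply: le_trans (enorm_mul_trmx_le _ enorm_model_jac _) _.
  by rewrite addr_ge0 ?B_ge0.
rewrite mulrAC [_ * (1 + B)]mulrC ler_wpM2l ?addr_ge0 ?B_ge0 //.
by have := F_smooth.2 (model_point x y1 i) (model_point x y2 i); rewrite enorm_model_pointB.
Qed.

Variables (Y : set 'rV[R]_m) (mu : R) (ys : 'rV[R]_n -> 'rV[R]_m).
Hypothesis mu_gt0 : 0 < mu.
Hypothesis Y_convex : e_convex_set Y.
Hypothesis l_concave : forall x z, strongly_concave_on mu Y (fun y => l x y z).
Hypothesis ys_argmax :
  forall x, Y (ys x) /\ forall y, Y y -> model_obj x y <= model_obj x (ys x).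

Lemma sup_model_obj x : sup [set model_obj x y | y in Y] = model_obj x (ys x).
Proof.
have [Yys ys_max] := ys_argmax x.
apply/le_anti/andP; split.
  by apply: ge_sup => [|_ [y Yy <-]]; [exists (model_obj x (ys x)), (ys x) | exact: ys_max].
apply: ub_le_sup; last by exists (ys x).
by exists (model_obj x (ys x)) => _ [y Yy <-]; exact: ys_max.
Qed.

(* Strong concavity at the midpoint of [y, ys x]. *)
Lemma model_obj_quadratic_growth x y : Y y ->
  mu / 4 * enorm (y - ys x) ^+ 2 <= model_obj x (ys x) - model_obj x y.
Proof.
move=> Yy; have [Yys ys_max] := ys_argmax x.
have half01 : 0 <= (2^-1 : R) <= 1 by apply/andP; split; lra.
set mid := 2^-1 *: ys x + (1 - 2^-1) *: y.
have := ys_max mid (Y_convex Yys Yy half01).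
have : mu / 2 * 2^-1 * (1 - 2^-1) * enorm (ys x - y) ^+ 2 <=
    model_obj x mid - (2^-1 * model_obj x (ys x) + (1 - 2^-1) * model_obj x y).
  pose z i := x *m B1 + B0 + e i.
  have -> : model_obj x mid - (2^-1 * model_obj x (ys x) + (1 - 2^-1) * model_obj x y) =
      N%:R^-1 * \sum_(i < N)
        (l x mid (z i) - (2^-1 * l x (ys x) (z i) + (1 - 2^-1) * l x y (z i))).
    by rewrite /model_obj sumrB big_split /= -!mulr_sumr; ring.
  by apply: avg_ge => // i; have := l_concave x (z i) Yys Yy half01; lra.
rewrite enorm_distC; lra.
Qed.

Lemma argmax_sqr_dist_le x v :
  enorm (ys (v + x) - ys x) ^+ 2 <= 8 * L1 * (1 + B) / mu * enorm v.
Proof.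
have [Yys' ys'_max] := ys_argmax (v + x).
have growth := model_obj_quadratic_growth x Yys'.
have := ys'_max _ (ys_argmax x).1.
have := model_obj_lipschitz_x (v + x) x (ys x).
have := model_obj_lipschitz_x (v + x) x (ys (v + x)).
rewrite addrK => /ler_normlP[? ?] /ler_normlP[? ?] ?.
rewrite mulrAC ler_pdivlMr //; nra.
Qed.

Lemma argmax_gain_le x v :
  0 <= model_obj (v + x) (ys (v + x)) - model_obj (v + x) (ys x)
    <= ell1 * (1 + B) * enorm v * enorm (ys (v + x) - ys x).
Proof.
have [Yys' ys'_max] := ys_argmax (v + x); have [Yys ys_max] := ys_argmax x.
have := ys_max _ Yys'; have := ys'_max _ Yys.
have /ler_normlP[_ cross] := model_obj_cross_le x v (ys (v + x)) (ys x).
by rewrite subr_ge0 => -> /=; lra.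
Qed.

Lemma derive_model_obj_argmax x v :
  'D_v (fun z => model_obj z (ys z)) x = 'D_v (model_obj^~ (ys x)) x.
Proof.
set y0 := ys x.
pose q h := h^-1 *: (model_obj (h *: v + x) (ys (h *: v + x)) - model_obj x y0).
pose r h := h^-1 *: (model_obj (h *: v + x) y0 - model_obj x y0).
have r_cvg : r @ 0^' --> 'D_v (model_obj^~ y0) x := (derive_model_obj x y0 v).1.
(* [q] and [r] differ by O(sqrt |h|) because [ys] is 1/2-Hoelder continuous. *)
pose K := ell1 * (1 + B) * enorm v.
have qr_sqr h : `|q h - r h| ^+ 2 <= K ^+ 2 * (8 * L1 * (1 + B) / mu * enorm v) * `|h|.
  set E := enorm (ys (h *: v + x) - y0).
  have [gain0] := andP (argmax_gain_le x (h *: v)); rewrite -/y0 -/E enormZ => gain.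
  have K0 : 0 <= K by rewrite !mulr_ge0 ?enorm_ge0 ?addr_ge0 ?B_ge0.
  have qr : `|q h - r h| <= K * E.
    have [->|h0] := eqVneq h 0.
      by rewrite /q /r !invr0 !scale0r subr0 normr0 mulr_ge0 ?enorm_ge0.
    rewrite /q /r -scalerBr opprB addrA subrK normrZ normfV (ger0_norm gain0).
    rewrite ler_pdivrMl ?normr_gt0 //.
    rewrite (_ : _ * (K * E) = ell1 * (1 + B) * (`|h| * enorm v) * E) //.
    by rewrite /K; ring.
  apply: (le_trans (_ : _ <= (K * E) ^+ 2)).
    by rewrite !expr2 ler_pM ?normr_ge0.
  rewrite exprMn -mulrA ler_wpM2l ?sqr_ge0 //.
  by have := argmax_sqr_dist_le x (h *: v); rewrite enormZ mulrA mulrAC -/y0 -/E.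
have := cvg_at0_of_sqr_le qr_sqr => /(cvgD r_cvg); rewrite addr0.
have -> : (r + (fun h => q h - r h))%R = q by apply: funext => h /=; rewrite addrC subrK.
exact: cvg_lim.
Qed.

Lemma egrad_sup_model_obj x :
  egrad (fun z => sup [set model_obj z y | y in Y]) x = egrad (model_obj^~ (ys x)) x.
Proof.
have -> : (fun z => sup [set model_obj z y | y in Y]) = fun z => model_obj z (ys z).
  by apply: funext => z; exact: sup_model_obj.
by apply/rowP => j; rewrite !mxE derive_model_obj_argmax.
Qed.

Lemma approx_value_change_le (Phi : 'rV[R]_n -> R) x0 x1 y0 y1 c : Y y0 ->
  `|Phi x0 - sup [set model_obj x0 y | y in Y]| <= c ->
  `|Phi x1 - sup [set model_obj x1 y | y in Y]| <= c ->
  L1 * enorm (ys x1 - y1) <= c ->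
  Phi x1 - Phi x0 <= 3 * c - (model_obj x0 y0 - model_obj x1 y1).
Proof.
rewrite !sup_model_obj => Yy0 /ler_normlP[? ?] /ler_normlP[? ?] y1_close.
have /ler_normlP[? ?] := model_obj_lipschitz_y x1 (ys x1) y1.
have := (ys_argmax x0).2 _ Yy0; lra.
Qed.

Lemma approx_egrad_ge (Phi : 'rV[R]_n -> R) x y c1 c2 :
  enorm (egrad Phi x) - enorm (egrad (fun z => sup [set model_obj z y | y in Y]) x) <= c1 ->
  ell1 * (1 + B) * enorm (ys x - y) <= c2 ->
  enorm (egrad Phi x) - (c1 + c2) <= enorm (egrad (model_obj^~ y) x).
Proof.
rewrite egrad_sup_model_obj => Phi_close y_close.
have := egrad_model_obj_lipschitz_y x (ys x) y.
set g := egrad (model_obj^~ y) x; set gs := egrad (model_obj^~ (ys x)) x.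
have := ler_enormD g (gs - g); rewrite addrC subrK; lra.
Qed.

End LocalModel.

(* With [t := G / (A M) >= dl], [C1 G = 4 kf t] and the decrease term is at least
   [(8 kf + 2 ke kd) t dl - 2 kd ke dl^2], which absorbs the [3 kf dl^2] error. *)
Lemma trust_region_decrease (R : realFieldType) (kd kf ke G g dl M P : R) :
  0 < kd -> 0 < kf -> 0 < ke -> 0 < dl -> dl <= M -> 1 <= M ->
  dl <= G / ((8 * kf / kd + 2 * ke) * M) ->
  G - 2 * ke * dl <= g -> 0 <= g ->
  P <= 3 * kf * dl ^+ 2 - kd * g * Num.min dl 1 ->
  P <= - ((4 * kd * kf) / ((8 * kf + 2 * ke * kd) * M)) * G * dl.
Proof.
move=> kd0 kf0 ke0 dl0 dlM M1 dl_le g_ge g0 hP.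
have M0 : 0 < M by lra.
set w := dl / M.
have w_le : w <= Num.min dl 1.
  by rewrite le_min !ler_pdivrMr // ler_peMr ?mul1r //; apply: ltW.
have wdl : w <= dl by rewrite ler_pdivrMr // ler_peMr //; apply: ltW.
have {}hP : P <= 3 * kf * dl ^+ 2 - kd * (G - 2 * ke * dl) * w.
  apply: le_trans hP (lerB (lexx _) (le_trans _ (ler_wpM2l _ w_le))).
    by rewrite ler_wpM2r ?divr_ge0 ?ler_wpM2l //; apply: ltW.
  by rewrite mulr_ge0 //; apply: ltW.
set A := 8 * kf / kd + 2 * ke.
have A0 : 0 < A by rewrite /A addr_gt0 ?divr_gt0 ?mulr_gt0.
set t := G / (A * M).
have Gt : G = A * M * t by rewrite /t mulrC divfK // mulf_neq0 // gt_eqF.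
have kdA : kd * A = 8 * kf + 2 * ke * kd by rewrite /A; field; rewrite gt_eqF.
rewrite mulNr; have -> : (4 * kd * kf) / ((8 * kf + 2 * ke * kd) * M) * G = 4 * kf * t.
  by rewrite Gt -kdA; field; rewrite !gt_eqF.
rewrite (_ : kd * (G - 2 * ke * dl) * w =
    (8 * kf + 2 * ke * kd) * t * dl - 2 * kd * ke * (dl * w)) in hP; last first.
  by rewrite /w Gt -kdA; field; rewrite gt_eqF.
have sq_le : dl * dl <= t * dl by rewrite ler_pM2r.
have h1 : kf * (dl * dl) <= kf * (t * dl) by rewrite ler_pM2l.
have h2 : kd * ke * (dl * w) <= kd * ke * (t * dl).
  by rewrite ler_pM2l ?mulr_gt0 //; apply: le_trans sq_le; rewrite ler_pM2l.
have t0 : 0 < t := lt_le_trans dl0 dl_le.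
have := mulr_ge0 (ltW kf0) (mulr_ge0 (ltW t0) (ltW dl0)).
rewrite expr2 in hP; lra.
Qed.

Theorem lemma4 (R : realType) (n m d : nat)
  (l : 'rV[R]_n -> 'rV[R]_m -> 'rV[R]_d -> R)
  (psi : 'rV[R]_n -> 'rV[R]_d)
  (Y : set 'rV[R]_m)
  (ell1 L1 ell0 L0 mu : R)
  (Hell1 : 0 < ell1) (HL1 : 0 < L1) (Hell0 : 0 < ell0) (HL0 : 0 < L0)
  (Hmu : 0 < mu)
  (Hl_smooth : e_smooth ell1 (uncurry3 l))
  (Hl_lip : e_lipschitz L1 (uncurry3 l))
  (Hpsi_twice : twice_differentiable psi)
  (Hpsi_smooth : e_smoothV ell0 psi)
  (Hpsi_lip : e_lipschitzV L0 psi)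
  (HY_ne : Y !=set0) (HY_closed : closed Y) (HY_convex : e_convex_set Y)
  (HY_bounded : e_bounded_set Y)
  (Hl_concave : forall x z, strongly_concave_on mu Y (fun y => l x y z))
  (dT : measure_display) (T : measurableType dT) (P : probability T R)
  (eps : T -> 'rV[R]_d)
  (Heps_meas : forall j : 'I_d, measurable_fun setT (fun w => eps w ord0 j))
  (Heps_supp : exists M : R, {ae P, forall w, enorm (eps w) <= M})
  (Heps_mean : forall j : 'I_d, Rintegral P setT (fun w => eps w ord0 j) = 0)
  (HPhi_diff : forall x, differentiable
     (fun x' => sup [set Rintegral P setT (fun w => l x' y (psi x' + eps w))
                    | y in Y]) x)
  (xk : 'rV[R]_n) (deltak deltamax : R)
  (Hdelta : 0 < deltak <= deltamax)
  (kdcp kef ked : R) (Hkdcp : 0 < kdcp) (Hkef : 0 < kef) (Hked : 0 < ked)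
  (N : nat) (HN : (0 < N)%N)
  (xs : 'I_N -> 'rV[R]_n) (Hxs : forall i, eball xk deltak (xs i))
  (ws : 'I_N -> T)   (* realizations eps^i = eps (ws i) *)
  (B1 : 'M[R]_(n, d)) (B0 : 'rV[R]_d)
  (HLS : forall (B1' : 'M[R]_(n, d)) (B0' : 'rV[R]_d),
      \sum_(i < N) enorm (psi (xs i) + eps (ws i) - (xs i *m B1 + B0)) ^+ 2
      <= \sum_(i < N) enorm (psi (xs i) + eps (ws i) - (xs i *m B1' + B0')) ^+ 2)
  (B : R) (HB : fnorm B1 <= B)
  (ykstar : 'rV[R]_n -> 'rV[R]_m)
  (Hykstar : forall x, Y (ykstar x) /\
     forall y, Y y ->
       (N%:R^-1 * \sum_(i < N) l x y (x *m B1 + B0 +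
           (psi (xs i) + eps (ws i) - (xs i *m B1 + B0))))
       <= (N%:R^-1 * \sum_(i < N) l x (ykstar x) (x *m B1 + B0 +
           (psi (xs i) + eps (ws i) - (xs i *m B1 + B0)))))
  (yi : 'rV[R]_n -> 'rV[R]_m)
  (s : 'rV[R]_n) :
  let omega := fun i : 'I_N => psi (xs i) + eps (ws i) in
  let e := fun i : 'I_N => omega i - (xs i *m B1 + B0) in
  let mk := fun (x : 'rV[R]_n) (e' : 'rV[R]_d) => x *m B1 + B0 + e' in
  let Lk := fun x y => N%:R^-1 * \sum_(i < N) l x y (mk x (e i)) in
  let Phik := fun x => sup [set Lk x y | y in Y] in
  let Lfull := fun x y => Rintegral P setT (fun w => l x y (psi x + eps w)) in
  let Phi := fun x => sup [set Lfull x y | y in Y] in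
  let ell1hat := ell1 * (1 + B) ^+ 2 in
  let gk := egrad (fun x => Lk x (yi xk)) xk in
  (forall x, eball xk deltak x -> Y (yi x)) ->
  (forall x, eball xk deltak x ->
     enorm (yi x - ykstar x)
       <= Num.min (ked * deltak / ell1hat) (kef * deltak ^+ 2 / L1)) ->
  enorm s <= deltak ->
  Lk xk (yi xk) - Lk (xk + s) (yi (xk + s))
    >= kdcp * enorm gk * Num.min deltak 1 ->
  (forall x, eball xk deltak x -> `|Phi x - Phik x| <= kef * deltak ^+ 2) ->
  enorm (egrad Phi xk) - enorm (egrad Phik xk) <= ked * deltak ->
  deltak <= enorm (egrad Phi xk)
            / ((8 * kef / kdcp + 2 * ked) * Num.max 1 deltamax) ->
  Phi (xk + s) - Phi xk
    <= - ((4 * kdcp * kef) / ((8 * kef + 2 * ked * kdcp) * Num.max deltamax 1))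
         * enorm (egrad Phi xk) * deltak.
Proof.
move=> omega e mk Lk Phik Lfull Phi ell1hat gk yi_Y yi_close s_le model_decrease
  Phi_close grad_close dk_le.
have [dk0 dk_max] := andP Hdelta.
have xk_in : eball xk deltak xk by rewrite /eball /= subrr enorm0 ltW.
have xs_in : eball xk deltak (xk + s) by rewrite /eball /= addrAC subrr add0r.
have L1_close : L1 * enorm (ykstar (xk + s) - yi (xk + s)) <= kef * deltak ^+ 2.
  rewrite enorm_distC -ler_pdivlMl // mulrC.
  by apply: le_trans (yi_close _ xs_in) _; rewrite ge_min lexx orbT.
have ell1_close : ell1 * (1 + B) * enorm (ykstar xk - yi xk) <= ked * deltak.
  have B_ge0 : 0 <= B := le_trans (fnorm_ge0 B1) HB.
  have B1_gt0 : 0 < 1 + B by rewrite ltr_pwDl.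
  rewrite enorm_distC mulrC -ler_pdivlMr ?mulr_gt0 //.
  apply: le_trans (yi_close _ xk_in) _; rewrite ge_min /ell1hat; apply/orP; left.
  rewrite expr2 mulrA invfM mulrA ler_pdivrMr // ler_peMr ?lerDl //.
  by rewrite divr_ge0 ?mulr_ge0 // ltW.
have value : Phi (xk + s) - Phi xk <=
    3 * (kef * deltak ^+ 2) - (Lk xk (yi xk) - Lk (xk + s) (yi (xk + s))) :=
  approx_value_change_le HN Hl_lip Hykstar (yi_Y _ xk_in) (Phi_close _ xk_in)
    (Phi_close _ xs_in) L1_close.
have grad : enorm (egrad Phi xk) - (ked * deltak + ked * deltak) <= enorm gk :=
  approx_egrad_ge HB HN (ltW HL1) (ltW Hell1) Hl_lip Hl_smooth Hmu HY_convex Hl_concave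
    Hykstar grad_close ell1_close.
rewrite maxC; apply: (trust_region_decrease _ _ _ _ _ _ dk_le _ (enorm_ge0 gk)) => //.
- by rewrite le_max dk_max orbT.
- by rewrite le_max lexx.
- lra.
- lra.
Qed.
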